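(* Let $n\in\mathbb{N}$, $\sigma\in[1/n,1]$, $\varepsilon\in(0,1)$, and let $q$ be an $n$-arm bandit with expected utilities vector $u\in[0,1]^n$. Let $\tilde u\in[0,1]^n$ be an arbitrary vector (the message received by the verifier of Protocol 1). Suppose there exists a $\sigma$-smooth strategy $\pi$ with $|\pi\cdot u-\pi\cdot\tilde u|\ge\varepsilon/2$. Then the verifier of Protocol 1, run on $\tilde u$ with oracle access to $\mathcal{O}_q$, rejects with probability at least $2/3$.
   Context: An $n$-arm bandit is a vector $q=(q_1,\dots,q_n)$ of distributions on $[0,1]$; its oracle $\mathcal{O}_q$ returns, on query (''pull'') $i$, an independent sample from $q_i$; $u_i=\mathbb{E}_{x\sim q_i}[x]$. A strategy $\pi$ is a distribution on $[n]$ with $\pi\cdot u=\sum_i\pi_iu_i$; it is $\sigma$-smooth if $\pi_i\le\sigma$ for all $i$. Protocol 1 (parameters $n,\sigma,\varepsilon$): Let $L=\log_4(1/\varepsilon)+2$ and $B=\{0,1,\dots,\lceil\log_4(1/\varepsilon)\rceil\}$. For $b\in B$ let $\varepsilon_b=\varepsilon\cdot4^b$, $a_b=\lceil 4^b\cdot 4n\sigma\cdot L\cdot\ln 6\rceil$ and $m_b=\lceil 128\ln(12\,L\,a_b)/\varepsilon_b^2\rceil$. The honest prover pulls each arm $i\in[n]$ exactly $k_P=\lceil128\ln(12n/\varepsilon)/\varepsilon^2\rceil$ times and sends the vector $\tilde u$ of empirical averages. The verifier receives $\tilde u\in[0,1]^n$; for each $b\in B$ and each $t\in[a_b]$, it samples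 $i_{b,t}$ uniformly from $[n]$ (independently), pulls arm $i_{b,t}$ exactly $m_b$ times, lets $\hat u_{i_{b,t}}$ be the empirical average, and rejects (terminating) if $|\tilde u_{i_{b,t}}-\hat u_{i_{b,t}}|>\varepsilon_b/8$. If it never rejects, it outputs the strategy $\pi_V$ computed from $\tilde u$ as follows: sort indices $i_1,\dots,i_n$ so that $\tilde u_{i_1}\ge\dots\ge\tilde u_{i_n}$, set $\pi_{i_j}=\sigma$ for $j\le\lfloor1/\sigma\rfloor$, $\pi_{i_j}=1-\sigma\lfloor1/\sigma\rfloor$ for $j=\lfloor1/\sigma\rfloor+1$, and $\pi_{i_j}=0$ otherwise. *)

From HB Require Import structures.
From mathcomp Require Import all_boot all_order all_algebra.
From mathcomp Require Import all_classical all_reals all_analysis.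
Set Implicit Arguments. Unset Strict Implicit. Unset Printing Implicit Defensive.
Import Order.TTheory GRing.Theory Num.Theory.
Local Open Scope classical_set_scope.
Local Open Scope ring_scope.

Section Bandit.
Variable R : realType.

Definition supported01 (mu : probability R R) : Prop :=
  mu [set x : R | 0 <= x <= 1] = 1%E.

Definition mean (mu : probability R R) : R := fine (\int[mu]_x (x%:E)).

(* iter_pull mu A k s = probability that s + X_1 + ... + X_k lies in A,
   where X_1,...,X_k are i.i.d. samples from mu (iterated integral
   = k-fold product measure of the event). *)
Fixpoint iter_pull (mu : probability R R) (A : set R) (k : nat) (s : R) : \bar R :=
  match k with
  | 0%N => (\1_A s)%:E
  | k'.+1 => \int[mu]_x iter_pull mu A k' (s + x)
  end.

Definition pass_prob (mu : probability R R) (c d : R) (m : nat) : R :=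
  fine (iter_pull mu [set s : R | `|c - s / m%:R| <= d] m 0).

Definition ceilN (x : R) : nat := `|Num.ceil x|%N.

Definition log4 (x : R) : R := ln x / ln 4.

Definition P1_L (eps : R) : R := log4 (1 / eps) + 2.
Definition P1_Bmax (eps : R) : nat := ceilN (log4 (1 / eps)).
Definition P1_eps (eps : R) (b : nat) : R := eps * 4 ^+ b.
Definition P1_a (n : nat) (sigma eps : R) (b : nat) : nat :=
  ceilN (4 ^+ b * (4 * n%:R * sigma) * P1_L eps * ln 6).
Definition P1_m (n : nat) (sigma eps : R) (b : nat) : nat :=
  ceilN (128 * ln (12 * P1_L eps * (P1_a n sigma eps b)%:R) / (P1_eps eps b) ^+ 2).

(* Probability that the verifier of Protocol 1 accepts message ut:
   all checks (b,t), b in B, t in [a_b], are independent; each picks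
   i uniformly in [n], pulls arm i m_b times and passes iff
   |ut_i - empirical average| <= eps_b / 8. *)
Definition P1_accept_prob (n : nat) (sigma eps : R)
    (q : 'I_n -> probability R R) (ut : 'I_n -> R) : R :=
  \prod_(b < (P1_Bmax eps).+1)
    \prod_(t < P1_a n sigma eps b)
      (n%:R^-1 * \sum_(i < n)
          pass_prob (q i) (ut i) (P1_eps eps b / 8) (P1_m n sigma eps b)).

Definition P1_reject_prob (n : nat) (sigma eps : R) (q : 'I_n -> probability R R) (ut : 'I_n -> R) : R :=
  1 - P1_accept_prob sigma eps q ut.

Definition smooth_strategy (n : nat) (sigma : R) (pi : 'I_n -> R) : Prop :=
  (forall i, 0 <= pi i) /\ \sum_(i < n) pi i = 1 /\ (forall i, pi i <= sigma).

Definition dotp (n : nat) (x y : 'I_n -> R) : R := \sum_(i < n) x i * y i.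

End Bandit.

From Pilot Require Import Defs.
From HB Require Import structures.
From mathcomp Require Import all_boot all_order all_algebra.
From mathcomp Require Import all_classical all_reals all_analysis.
From mathcomp Require Import measurable_realfun ring lra.
Import Order.TTheory GRing.Theory Num.Theory.
Local Open Scope ring_scope.

(* Group the arms by the dyadic scale of their gap [|u_i - ut_i|]: writing
   [eps_b = eps 4^b] and [c_b] for the number of arms with gap at least
   [eps_b / 4], a gap [d <= 1] is at most [eps / 4 + sum_b [eps_b / 4 <= d] eps_b].
   Averaging against a sigma-smooth [pi] with [|pi.(u - ut)| >= eps / 2] gives
   [eps / 4 <= sum_b sigma eps_b c_b], hence a scale [b] with
   [4 L sigma 4^b c_b >= 1], i.e. [a_b c_b >= n ln 6].  At that scale a single
   check draws a far arm with probability [c_b / n], and by Chebyshev's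
   inequality with [m_b] pulls the empirical mean of a far arm stays within
   [eps_b / 8] of [ut_i] with probability at most [1/4].  So all [a_b] checks
   of scale [b] pass with probability at most
   [(1 - 3 c_b / (4 n))^a_b <= exp (- 3/4 ln 6) <= 1/3]. *)

Section nonneg_integral.
Local Open Scope ereal_scope.
Context d (T : measurableType d) (R : realType) (mu : {measure set T -> \bar R}).

(* No measurability is needed: the integral of a nonnegative function is a
   supremum over the simple functions below it.  The integrands [iter_pull]
   are not known to be measurable. *)
Lemma ge0_le_integralT (f g : T -> \bar R) :
  (forall x, 0 <= f x) -> (forall x, f x <= g x) ->
  \int[mu]_x f x <= \int[mu]_x g x.
Proof.
move=> f0 fg; have g0 x : 0 <= g x by exact: le_trans (f0 x) (fg x).
rewrite !ge0_integralTE //; apply: ereal_sup_le => _ [h hf <-].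
by exists h => //= x; exact: le_trans (hf x) (fg x).
Qed.

End nonneg_integral.

Section supported01.
Local Open Scope classical_set_scope.
Local Open Scope ereal_scope.
Context {R : realType} {mu : probability R R}.
Hypothesis mu01 : supported01 mu.

Lemma supported01E : (mu : {measure set R -> \bar R}) `[0%R, 1%R] = 1.
Proof.
by rewrite -mu01; congr (mu _); apply/seteqP; split => x /=; rewrite in_itv.
Qed.

Lemma supported01_setC : mu (~` `[0%R, 1%R]) = 0.
Proof. by rewrite probability_setC // supported01E subee. Qed.

Lemma integral_supported01 (f : R -> R) : measurable_fun setT f ->
  \int[mu]_x (f x)%:E = \int[mu]_(x in `[0%R, 1%R]) (f x)%:E.
Proof.
move=> mf; have mfE : measurable_fun setT (fun x => (f x)%:E) by exact/measurable_EFinP.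
rewrite -(setUv `[0%R, 1%R]) integral_setU //; last 3 first.
- exact: measurableC.
- by rewrite setUv.
- exact/disj_setPCl.
rewrite (null_set_integral (N := ~` _)) ?adde0 //.
- exact: measurableC.
- exact: measurable_funS mfE.
exact: supported01_setC.
Qed.

Lemma integral_itv01_id_ge0 : 0 <= \int[mu]_(x in `[0%R, 1%R]) x%:E.
Proof. by apply: integral_ge0 => x; rewrite /= in_itv /= lee_fin => /andP[]. Qed.

Lemma integral_itv01_id_le1 : \int[mu]_(x in `[0%R, 1%R]) x%:E <= 1.
Proof.
have -> : 1 = \int[mu]_(x in `[0%R, 1%R]) cst 1 x.
  by rewrite integral_cst // mul1e supported01E.
by apply: ge0_le_integral => // x; rewrite /= in_itv /= lee_fin => /andP[].
Qed.

Lemma integral_itv01_id : \int[mu]_(x in `[0%R, 1%R]) x%:E = (mean mu)%:E.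
Proof.
rewrite /mean (@integral_supported01 id) // fineK // ge0_fin_numE.
  by rewrite (le_lt_trans integral_itv01_id_le1) ?ltey.
exact: integral_itv01_id_ge0.
Qed.

Lemma mean_itv01 : (0 <= mean mu <= 1)%R.
Proof.
by rewrite -!lee_fin -integral_itv01_id integral_itv01_id_ge0 integral_itv01_id_le1.
Qed.

Lemma integral_itv01_affine (a b : R) :
  \int[mu]_(x in `[0%R, 1%R]) (a * x + b)%:E = (a * mean mu + b)%:E.
Proof.
have ix : mu.-integrable `[0%R, 1%R] (EFin \o id).
  apply: measurable_bounded_integrable => //.
  - by rewrite supported01E ltey.
  - exists 1%R; split => // M M1 x; rewrite /= in_itv /= => /andP[x0 x1].
    by rewrite ger0_norm // (le_trans x1) // ltW.
under eq_integral do rewrite EFinD EFinM.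
rewrite integralD //; last 2 first.
- exact: integrableZl.
- exact: finite_measure_integrable_cst.
rewrite integralZl // integral_itv01_id integral_cst //.
by rewrite supported01E mule1.
Qed.

End supported01.

Section iterated_pulls.
Local Open Scope ereal_scope.
Context {R : realType} (mu : probability R R).

Lemma iter_pull_itv01 (A : set R) k s : 0 <= iter_pull mu A k s <= 1.
Proof.
elim: k s => [|k IH] s /=.
  by rewrite indicE; case: (s \in A); rewrite /= ?lee01 ?lexx.
have ge0 x : 0 <= iter_pull mu A k (s + x) by case/andP: (IH (s + x)%R).
rewrite integral_ge0 //=.
have -> : 1 = \int[mu]_x cst 1 x
  by rewrite integral_cst // mul1e; exact/esym/probability_setT.
by apply: ge0_le_integralT => x //; case/andP: (IH (s + x)%R).
Qed.

Lemma iter_pull_fin_num (A : set R) k s : iter_pull mu A k s \is a fin_num.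
Proof.
have /andP[ge0 le1] := iter_pull_itv01 A k s.
by rewrite ge0_fin_numE // (le_lt_trans le1) ?ltey.
Qed.

Lemma pass_prob_itv01 c d m : (0 <= pass_prob mu c d m <= 1)%R.
Proof. by rewrite -!lee_fin fineK ?iter_pull_itv01 ?iter_pull_fin_num. Qed.

Hypothesis mu01 : supported01 mu.

(* Chebyshev's inequality for [s + X_1 + ... + X_k], by induction on [k]:
   since [x ^+ 2 <= x] on [0, 1], each pull adds at most [1] to the second
   moment around the mean. *)
Lemma iter_pull_chebyshev (A : set R) (a M : R) : (0 < M)%R ->
  (forall s, A s -> (1 <= (s - a) ^+ 2 / M)%R) ->
  forall k s,
    iter_pull mu A k s <= ((((s + k%:R * mean mu - a) ^+ 2 + k%:R) / M)%R)%:E.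
Proof.
move=> M0 HA; have /andP[u0 u1] := mean_itv01 mu01.
elim=> [|k IH] s /=.
  rewrite indicE lee_fin mul0r !addr0.
  case: (boolP (s \in A)) => [/set_mem/HA //|_].
  by rewrite divr_ge0 ?sqr_ge0 ?ltW.
set c := (s + k%:R * mean mu - a)%R.
have quad_mf : measurable_fun setT (fun x : R => (((x + c) ^+ 2 + k%:R) / M)%R).
  apply: measurable_funM => //; apply: measurable_funD => //.
  by apply: measurable_funX; apply: measurable_funD.
apply: (@le_trans _ _ (\int[mu]_x ((((x + c) ^+ 2 + k%:R) / M)%R)%:E)).
  apply: ge0_le_integralT => x.
    by case/andP: (iter_pull_itv01 A k (s + x)%R).
  by rewrite (_ : (x + c = s + x + k%:R * mean mu - a)%R) ?IH // /c; ring.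
rewrite (integral_supported01 mu01) //.
apply: (@le_trans _ _ (\int[mu]_(x in `[0%R, 1%R])
    (((1 + 2 * c) / M) * x + (c ^+ 2 + k%:R) / M)%R%:E)).
  apply: ge0_le_integral => //.
  - by move=> x _; rewrite lee_fin divr_ge0 ?addr_ge0 ?sqr_ge0 ?ler0n ?ltW.
  - by apply/measurable_EFinP; exact: measurable_funS quad_mf.
  - apply/measurable_EFinP; apply: measurable_funD => //; apply: measurable_funM => //.
  move=> x; rewrite /= in_itv /= lee_fin => /andP[x0 x1].
  rewrite [(_ / M * x)%R]mulrAC -mulrDl ler_pM2r ?invr_gt0 //; nra.
rewrite (integral_itv01_affine mu01) lee_fin.
rewrite [(_ / M * mean mu)%R]mulrAC -mulrDl ler_pM2r ?invr_gt0 //.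
rewrite (_ : (s + k.+1%:R * mean mu - a = c + mean mu)%R); last first.
  by rewrite /c -addn1 natrD; ring.
rewrite -addn1 natrD; nra.
Qed.

End iterated_pulls.

Lemma pass_prob_far (R : realType) (mu : probability R R) (c d : R) (m : nat) :
  supported01 mu -> 0 < d -> (0 < m)%N -> 2 * d <= `|c - mean mu| ->
  pass_prob mu c d m <= (m%:R * d ^+ 2)^-1.
Proof.
move=> mu01 d0 m0 far; have mR : 0 < m%:R :> R by rewrite ltr0n.
have M0 : 0 < (m%:R * d) ^+ 2 :> R by rewrite exprn_gt0 ?mulr_gt0.
have far_avg s : `|c - s / m%:R| <= d -> 1 <= (s - m%:R * mean mu) ^+ 2 / (m%:R * d) ^+ 2.
  move=> close; rewrite ler_pdivlMr // mul1r.
  rewrite (_ : s - m%:R * mean mu = m%:R * (s / m%:R - mean mu)); last by field; rewrite gt_eqF.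
  rewrite !exprMn ler_pM2l ?exprn_gt0 // -[(s / m%:R - mean mu) ^+ 2]real_normK ?num_real //.
  rewrite lerXn2r ?nnegrE ?normr_ge0 ?(ltW d0) //.
  have := ler_distD (s / m%:R) c (mean mu); lra.
have := iter_pull_chebyshev mu mu01 [set s | `|c - s / m%:R| <= d] _ _ M0 far_avg m 0.
rewrite add0r subrr expr0n /= add0r => cheb.
rewrite /pass_prob -lee_fin fineK ?iter_pull_fin_num // (le_trans cheb) // lee_fin.
rewrite (_ : m%:R / (m%:R * d) ^+ 2 = (m%:R * d ^+ 2)^-1) //.
by field; rewrite !gt_eqF.
Qed.

Section real_facts.
Context {R : realType}.

Lemma ln_ge2 (x : R) : 16 <= x -> 2 <= ln x.
Proof.
move=> x16; have ln2 : 1 / 2 <= ln (2 : R).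
  by have := expR_ge1Dx (- ln (2 : R)); rewrite expRN lnK ?posrE //; lra.
apply: (@le_trans _ _ (ln (2 ^+ 4 : R))); last by rewrite ler_ln ?posrE //; lra.
by rewrite lnXn // -[X in _ <= X]mulr_natr; lra.
Qed.

Lemma ln3_le_ln6 : ln (3 : R) <= 3 / 4 * ln 6.
Proof.
have : ln ((3 : R) ^+ 4) <= ln ((6 : R) ^+ 3).
  by rewrite ler_ln ?posrE ?exprn_gt0 // -!natrX ler_nat.
by rewrite !lnXn // -[ln 3 *+ 4]mulr_natr -[ln 6 *+ 3]mulr_natr; lra.
Qed.

Lemma expr_le_third (y : R) (a : nat) :
  0 <= 1 - y -> ln 3 <= a%:R * y -> (1 - y) ^+ a <= 1 / 3.
Proof.
move=> y1 ln3a; have le_exp : 1 - y <= expR (- y) by have := expR_ge1Dx (- y); lra.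
apply: (@le_trans _ _ (expR (- y) ^+ a)); first by rewrite lerXn2r // nnegrE ltW ?expR_gt0.
have -> : 1 / 3 = expR (- ln (3 : R)) by rewrite expRN lnK ?posrE // div1r.
by rewrite -expRM_natl mulrN ler_expR lerN2.
Qed.

Lemma exists_ge_sum (N : nat) (x : 'I_N.+1 -> R) (y : R) :
  y <= \sum_(b < N.+1) x b -> exists b, y <= N.+1%:R * x b.
Proof.
case: (@arg_maxP _ _ _ ord0 xpredT x isT) => b _ bmax le_sum; exists b.
apply: (le_trans le_sum); rewrite mulr_natl -[in x b *+ _](card_ord N.+1) -sumr_const.
by apply: ler_sum => i _; exact: bmax.
Qed.

Lemma ceilN_ge (x : R) : 0 <= x -> x <= (Defs.ceilN x)%:R.
Proof.
by move=> x0; rewrite /Defs.ceilN natr_absz ger0_norm ?ceil_ge // ceil_ge0; lra.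
Qed.

Lemma ceilN_lt (x : R) : 0 <= x -> (Defs.ceilN x)%:R < x + 1.
Proof.
move=> x0; rewrite /Defs.ceilN natr_absz ger0_norm ?ceil_ge0; last lra.
by have /andP[+ _] := ceil_itv x; rewrite intrD /=; lra.
Qed.

Lemma ceilN_gt0 (x : R) : 0 < x -> (0 < Defs.ceilN x)%N.
Proof. by move=> x0; rewrite -(ltr0n R) (lt_le_trans x0) ?ceilN_ge ?ltW. Qed.

(* The scales [eps 4^b] cover [0, 1] from [eps / 4] on: a gap [d] is at most
   the largest scale [e] with [e / 4 <= d], unless [d < eps / 4]. *)
Lemma le_dyadic_sum (eps d : R) (B : nat) :
  0 < eps -> d <= 1 -> 1 <= P1_eps eps B ->
  d <= eps / 4 + \sum_(b < B.+1) (P1_eps eps b / 4 <= d)%R%:R * P1_eps eps b.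
Proof.
move=> eps0 d1 epsB; set S := \sum_(b < B.+1) _.
rewrite leNgt; apply/negP => ltS.
have term_ge0 (b : 'I_B.+1) : 0 <= (P1_eps eps b / 4 <= d)%R%:R * P1_eps eps b.
  by rewrite mulr_ge0 ?ler0n // mulr_ge0 ?exprn_ge0 ?ltW.
have S0 : 0 <= S by rewrite sumr_ge0.
have term_le (b : 'I_B.+1) : (P1_eps eps b / 4 <= d)%R%:R * P1_eps eps b <= S.
  by rewrite /S (bigD1 b) //= lerDl sumr_ge0.
have scale_le b : (b <= B)%N -> P1_eps eps b / 4 <= d.
  elim: b => [_|b IH ltbB]; first by rewrite /P1_eps expr0 mulr1; lra.
  have := term_le (@Ordinal B.+1 b (ltnW ltbB)); rewrite /= IH ?(ltnW ltbB) // mul1r.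
  by rewrite /P1_eps exprSr mulrA mulfK //; lra.
by have := term_le ord_max; rewrite /= scale_le // mul1r; lra.
Qed.

End real_facts.

Lemma smooth_strategy_dim_gt0 {R : realType} {n : nat} {sigma : R} {p : 'I_n -> R} :
  smooth_strategy sigma p -> (0 < n)%N.
Proof. by case: n p => // p [_ []]; rewrite big_ord0 => /eqP; rewrite eq_sym oner_eq0. Qed.

Section protocol1.
Context {R : realType} {n : nat} {sigma eps : R}.
Context {q : 'I_n -> probability R R} {ut : 'I_n -> R}.
Hypotheses (n_gt0 : (0 < n)%N) (sigma_gt0 : 0 < sigma).
Hypotheses (eps_gt0 : 0 < eps) (eps_lt1 : eps < 1).
Hypotheses (q01 : forall i, supported01 (q i)) (ut01 : forall i, 0 <= ut i <= 1).

Definition arm_gap i := `|mean (q i) - ut i|.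

Definition far_arm b i : bool := P1_eps eps b / 4 <= arm_gap i.

Definition far_count b : R := \sum_(i < n) (far_arm b i)%:R.

Definition avg_pass_prob b : R :=
  n%:R^-1 * \sum_(i < n) pass_prob (q i) (ut i) (P1_eps eps b / 8) (P1_m n sigma eps b).

Lemma arm_gap_le1 i : arm_gap i <= 1.
Proof.
have /andP[u0 u1] := mean_itv01 (q01 i); have /andP[t0 t1] := ut01 i.
by rewrite /arm_gap ler_norml; apply/andP; split; lra.
Qed.

Lemma far_count_ge0 b : 0 <= far_count b.
Proof. by rewrite sumr_ge0. Qed.

Lemma P1_eps_gt0 b : 0 < P1_eps eps b.
Proof. by rewrite mulr_gt0 ?exprn_gt0. Qed.

Lemma log4_inv_eps_ge0 : 0 <= log4 (1 / eps).
Proof.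
have inv_eps : 1 <= 1 / eps by rewrite div1r invf_ge1 ?ltW.
by rewrite divr_ge0 ?ln_ge0 //; lra.
Qed.

Lemma P1_L_ge2 : 2 <= P1_L eps.
Proof. by have := log4_inv_eps_ge0; rewrite /P1_L; lra. Qed.

Lemma P1_Bmax_lt_L : (P1_Bmax eps).+1%:R <= P1_L eps.
Proof.
by have := ceilN_lt _ log4_inv_eps_ge0; rewrite /P1_L -addn1 natrD; lra.
Qed.

Lemma P1_eps_Bmax_ge1 : 1 <= P1_eps eps (P1_Bmax eps).
Proof.
have ln4 : 0 < ln (4 : R) by rewrite ln_gt0 //; lra.
rewrite /P1_eps -ler_pdivrMl // mulr1 -ler_ln ?posrE ?invr_gt0 ?exprn_gt0 //.
have -> : ln eps^-1 = log4 (1 / eps) * ln 4 by rewrite /log4 div1r divfK ?gt_eqF.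
rewrite lnXn // -[X in _ <= X]mulr_natl ler_pM2r //.
exact: ceilN_ge log4_inv_eps_ge0.
Qed.

Lemma smooth_gap_le (pi : 'I_n -> R) : smooth_strategy sigma pi ->
  \sum_(i < n) pi i * arm_gap i <=
    eps / 4 + \sum_(b < (P1_Bmax eps).+1) sigma * (P1_eps eps b * far_count b).
Proof.
case=> pi_ge0 [pi_sum pi_le].
have gap_le i := le_dyadic_sum _ _ _ eps_gt0 (arm_gap_le1 i) P1_eps_Bmax_ge1.
apply: le_trans (ler_sum _ (fun i _ => ler_wpM2l (pi_ge0 i) (gap_le i))) _.
under eq_bigr do rewrite mulrDr.
rewrite big_split /= -mulr_suml pi_sum mul1r lerD2l.
under eq_bigr do rewrite mulr_sumr.
rewrite exchange_big /=; apply: ler_sum => b _.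
rewrite /far_count !mulr_sumr; apply: ler_sum => i _.
rewrite [X in _ <= sigma * X]mulrC; apply: ler_wpM2r; last exact: pi_le.
by rewrite mulr_ge0 ?ler0n ?ltW ?P1_eps_gt0.
Qed.

Lemma exists_heavy_scale (pi : 'I_n -> R) : smooth_strategy sigma pi ->
  eps / 2 <= `|dotp pi (fun i => mean (q i)) - dotp pi ut| ->
  exists b : 'I_(P1_Bmax eps).+1, 1 <= 4 * P1_L eps * sigma * 4 ^+ b * far_count b.
Proof.
move=> pi_smooth pi_gap.
have gap : eps / 2 <= \sum_(i < n) pi i * arm_gap i.
  apply: (le_trans pi_gap); rewrite /dotp -sumrB.
  apply: (le_trans (ler_norm_sum _ _ _)); apply: ler_sum => i _.
  by rewrite -mulrBr normrM ger0_norm //; case: pi_smooth.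
have [b heavy] : exists b : 'I_(P1_Bmax eps).+1,
    eps / 4 <= (P1_Bmax eps).+1%:R * (sigma * (P1_eps eps b * far_count b)).
  by apply: exists_ge_sum; have := smooth_gap_le pi pi_smooth; lra.
exists b; have : eps / 4 <= P1_L eps * (sigma * (P1_eps eps b * far_count b)).
  apply: (le_trans heavy); apply: ler_wpM2r P1_Bmax_lt_L.
  by rewrite mulr_ge0 ?mulr_ge0 ?far_count_ge0 ?ltW ?P1_eps_gt0.
rewrite -(ler_pM2l eps_gt0) mulr1.
have -> : eps * (4 * P1_L eps * sigma * 4 ^+ b * far_count b) =
    4 * (P1_L eps * (sigma * (P1_eps eps b * far_count b))) by rewrite /P1_eps; ring.
lra.
Qed.

Lemma P1_a_far_count b : 1 <= 4 * P1_L eps * sigma * 4 ^+ b * far_count b ->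
  n%:R * ln 6 <= (P1_a n sigma eps b)%:R * far_count b.
Proof.
move=> heavy; have ln6 : 0 < ln (6 : R) by rewrite ln_gt0 //; lra.
have L2 := P1_L_ge2.
have a_ge : 4 ^+ b * (4 * n%:R * sigma) * P1_L eps * ln 6 <= (P1_a n sigma eps b)%:R.
  by apply: ceilN_ge; rewrite !mulr_ge0 ?exprn_ge0 ?ler0n ?ltW //; lra.
apply: (@le_trans _ _ (n%:R * ln 6 * (4 * P1_L eps * sigma * 4 ^+ b * far_count b))).
  by rewrite ler_peMr // mulr_ge0 ?ler0n ?ltW.
rewrite (_ : _ * (_ * _) = 4 ^+ b * (4 * n%:R * sigma) * P1_L eps * ln 6 * far_count b).
  by apply: ler_wpM2r; [exact: far_count_ge0 | exact: a_ge].
ring.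
Qed.

Lemma P1_m_ge b : 4 <= (P1_m n sigma eps b)%:R * (P1_eps eps b / 8) ^+ 2.
Proof.
have L2 := P1_L_ge2; have e0 := P1_eps_gt0 b.
set lnX := ln (12 * P1_L eps * (P1_a n sigma eps b)%:R).
have a_ge1 : 1 <= (P1_a n sigma eps b)%:R :> R.
  have ln6 : 0 < ln (6 : R) by rewrite ln_gt0 //; lra.
  have L0 : 0 < P1_L eps by lra.
  by rewrite ler1n ceilN_gt0 // !mulr_gt0 ?exprn_gt0 ?ltr0n.
have lnX_ge2 : 2 <= lnX.
  have La : 2 * 1 <= P1_L eps * (P1_a n sigma eps b)%:R by rewrite ler_pM.
  by apply: ln_ge2; rewrite -mulrA; lra.
have m_ge : 128 * lnX / P1_eps eps b ^+ 2 <= (P1_m n sigma eps b)%:R.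
  by apply: ceilN_ge; rewrite divr_ge0 ?sqr_ge0 ?mulr_ge0 // (le_trans _ lnX_ge2).
apply: le_trans (ler_wpM2r (sqr_ge0 _) m_ge).
have -> : 128 * lnX / P1_eps eps b ^+ 2 * (P1_eps eps b / 8) ^+ 2 = 2 * lnX.
  by field; rewrite gt_eqF.
lra.
Qed.

Lemma far_pass_prob_le b i : far_arm b i ->
  pass_prob (q i) (ut i) (P1_eps eps b / 8) (P1_m n sigma eps b) <= 1 / 4.
Proof.
move=> far; have := P1_m_ge b; set m := P1_m _ _ _ _ => m_ge.
have e0 := P1_eps_gt0 b.
have m_gt0 : (0 < m)%N.
  by rewrite lt0n; apply/eqP => m0; move: m_ge; rewrite m0 mul0r; lra.
apply: le_trans (pass_prob_far _ _ (ut i) _ m (q01 i) _ m_gt0 _) _.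
- by rewrite divr_gt0.
- by rewrite distrC; move: far; rewrite /far_arm /arm_gap; lra.
by rewrite div1r lef_pV2 ?posrE //; lra.
Qed.

Lemma avg_pass_prob_itv01 b : 0 <= avg_pass_prob b <= 1.
Proof.
have pass01 i := pass_prob_itv01 (q i) (ut i) (P1_eps eps b / 8) (P1_m n sigma eps b).
rewrite mulr_ge0 ?invr_ge0 ?ler0n ?sumr_ge0 //=; last by move=> i _; case/andP: (pass01 i).
rewrite ler_pdivrMl ?ltr0n // mulr1 -[X in _ <= X%:R]card_ord -sumr_const.
by apply: ler_sum => i _; case/andP: (pass01 i).
Qed.

Lemma avg_pass_prob_le b : avg_pass_prob b <= 1 - 3 / 4 * far_count b / n%:R.
Proof.
have le_sum : \sum_(i < n) pass_prob (q i) (ut i) (P1_eps eps b / 8) (P1_m n sigma eps b)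
    <= \sum_(i < n) (1 - 3 / 4 * (far_arm b i)%:R).
  apply: ler_sum => i _; case: (boolP (far_arm b i)) => [far|_] /=.
    by have := far_pass_prob_le b i far; lra.
  by have /andP[] := pass_prob_itv01 (q i) (ut i) (P1_eps eps b / 8) (P1_m n sigma eps b); lra.
apply: le_trans (ler_wpM2l _ le_sum) _; first by rewrite invr_ge0 ler0n.
rewrite sumrB sumr_const card_ord -mulr_sumr -/(far_count b).
rewrite (_ : n%:R^-1 * _ = 1 - 3 / 4 * far_count b / n%:R) //.
by field; rewrite pnatr_eq0 -lt0n.
Qed.

Lemma avg_pass_prob_pow_le b : 1 <= 4 * P1_L eps * sigma * 4 ^+ b * far_count b ->
  avg_pass_prob b ^+ P1_a n sigma eps b <= 1 / 3.
Proof.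
move=> heavy; have /andP[avg0 _] := avg_pass_prob_itv01 b.
have y1 : 0 <= 1 - 3 / 4 * far_count b / n%:R := le_trans avg0 (avg_pass_prob_le b).
apply: le_trans (lerXn2r _ _ _ (avg_pass_prob_le b)) _; rewrite ?nnegrE //.
apply: expr_le_third y1 _.
rewrite mulrA mulrA ler_pdivlMr ?ltr0n //.
have := ler_wpM2r (ler0n R n) ln3_le_ln6; have := P1_a_far_count b heavy; lra.
Qed.

Lemma P1_accept_prob_le (b : 'I_(P1_Bmax eps).+1) :
  P1_accept_prob sigma eps q ut <= avg_pass_prob b ^+ P1_a n sigma eps b.
Proof.
have avg01 c := avg_pass_prob_itv01 c.
rewrite /P1_accept_prob (bigD1 b) //= prodr_const card_ord.
rewrite ler_piMr ?exprn_ge0 //; first by case/andP: (avg01 b).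
apply: prodr_ile1 => c _; apply/andP; split.
  by apply: prodr_ge0 => t _; case/andP: (avg01 c).
by apply: prodr_ile1 => t _; exact: avg01.
Qed.

Lemma P1_accept_prob_le_third (pi : 'I_n -> R) : smooth_strategy sigma pi ->
  eps / 2 <= `|dotp pi (fun i => mean (q i)) - dotp pi ut| ->
  P1_accept_prob sigma eps q ut <= 1 / 3.
Proof.
move=> pi_smooth pi_gap; have [b heavy] := exists_heavy_scale pi pi_smooth pi_gap.
exact: le_trans (P1_accept_prob_le b) (avg_pass_prob_pow_le b heavy).
Qed.

End protocol1.

Theorem mainTheorem2 (R : realType) (n : nat) (sigma eps : R)
    (q : 'I_n -> probability R R) (ut : 'I_n -> R) :
  n%:R^-1 <= sigma -> sigma <= 1 ->
  0 < eps -> eps < 1 ->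
  (forall i, supported01 (q i)) ->
  (forall i, 0 <= ut i <= 1) ->
  (exists pi : 'I_n -> R, smooth_strategy sigma pi /\
     eps / 2 <= `|dotp pi (fun i => mean (q i)) - dotp pi ut|) ->
  2 / 3 <= P1_reject_prob sigma eps q ut.
Proof.
move=> sigma_ge _ eps_gt0 eps_lt1 q01 ut01 [pi [pi_smooth pi_gap]].
have n_gt0 := smooth_strategy_dim_gt0 pi_smooth.
have sigma_gt0 : 0 < sigma by apply: lt_le_trans sigma_ge; rewrite invr_gt0 ltr0n.
have := P1_accept_prob_le_third n_gt0 sigma_gt0 eps_gt0 eps_lt1 q01 ut01 pi pi_smooth pi_gap.
by rewrite /P1_reject_prob; lra.
Qed.
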